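(* Consider finitely many tanks, each colored red or blue, with arbitrary real initial water levels $x_a$. Arrange the tanks in a row in order of decreasing initial water level, breaking ties so that among tanks of equal level, all blue tanks are placed to the left of all red tanks. Consider any execution of the following procedure: while some red tank is positioned (anywhere) to the left of some blue tank in the row, choose any red tank $a$ immediately to the left of (i.e. adjacent to) a blue tank $b$, equilibrate $a$ and $b$, and then swap the positions of $a$ and $b$ in the row. Then this procedure terminates, and the total amount of water in the blue tanks at the end is at least as large as the total amount of water in the blue tanks at the end of any other finite sequence of pairwise equilibrations applied to the same initial configuration.
   Context: Equilibrating two tanks $a \neq b$ with water levels $x_a, x_b$ replaces both levels by $\frac{x_a+x_b}{2}$ and leaves all other tanks unchanged. A strategy is a finite sequence of pairs of distinct tanks, executed as the corresponding equilibrations; ''transferring more water from the red tanks to the blue tanks'' means ending with a larger total amount of water in the blue tanks. *)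

From HB Require Import structures.
From mathcomp Require Import all_boot all_order all_algebra.
Set Implicit Arguments. Unset Strict Implicit. Unset Printing Implicit Defensive.
Import Order.TTheory GRing.Theory Num.Theory.
Local Open Scope ring_scope.

(* Tanks are 'I_n.  A colouring is col : 'I_n -> bool with
   col a = true meaning "a is blue", col a = false meaning "a is red". *)

Section Tanks.
Variables (R : realFieldType) (n : nat).

Definition equilibrate (x : 'I_n -> R) (a b : 'I_n) : 'I_n -> R :=
  fun t => if (t == a) || (t == b) then (x a + x b) / 2 else x t.

Definition valid_strategy (s : seq ('I_n * 'I_n)) : bool :=
  all (fun p => p.1 != p.2) s.

Definition run_strategy (x : 'I_n -> R) (s : seq ('I_n * 'I_n)) : 'I_n -> R :=
  foldl (fun y p => equilibrate y p.1 p.2) x s.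

Definition blue_total (col : 'I_n -> bool) (x : 'I_n -> R) : R :=
  \sum_(a < n | col a) x a.

(* Initial row: every tank exactly once, in order of decreasing level, with
   ties broken so that blue tanks come before red tanks of the same level.
   [row_before a b] : a may be placed (anywhere) to the left of b. *)
Definition row_before (col : 'I_n -> bool) (x : 'I_n -> R) (a b : 'I_n) : bool :=
  (x b < x a) || ((x a == x b) && (col a || ~~ col b)).

Definition initial_row (col : 'I_n -> bool) (x : 'I_n -> R) (r : seq 'I_n) : Prop :=
  perm_eq r (enum 'I_n) /\ pairwise (row_before col x) r.

Definition state := (('I_n -> R) * seq 'I_n)%type.

Definition proc_step (col : 'I_n -> bool) (s s' : state) : Prop :=
  exists (r1 r2 : seq 'I_n) (a b : 'I_n),
    [/\ s.2 = r1 ++ a :: b :: r2, ~~ col a, col b,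
        s'.1 = equilibrate s.1 a b & s'.2 = r1 ++ b :: a :: r2].

Definition red_left_of_blue (col : 'I_n -> bool) (r : seq 'I_n) : Prop :=
  exists (r1 r2 r3 : seq 'I_n) (a b : 'I_n),
    [/\ r = r1 ++ a :: r2 ++ b :: r3, ~~ col a & col b].

Inductive reaches (col : 'I_n -> bool) : state -> state -> Prop :=
  | reaches_refl s : reaches col s s
  | reaches_step s s' s'' : proc_step col s s' -> reaches col s' s'' -> reaches col s s''.
End Tanks.

From HB Require Import structures.
From mathcomp Require Import all_boot all_order all_algebra.
From mathcomp Require Import ring lra zify.
Set Implicit Arguments. Unset Strict Implicit. Unset Printing Implicit Defensive.
Import Order.TTheory GRing.Theory Num.Theory.
Local Open Scope ring_scope.

(* The water in the blue tanks at the end of the procedure is a linear form in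
   the initial levels, [row_value 0 K r x] for the row [r] (K blue tanks), whose
   coefficients [weight] depend only on the colours of the tanks and on how many
   red tanks precede and blue tanks follow each one.  A procedure step
   (equilibrate a red tank with the blue tank on its right and swap them) leaves
   this form unchanged, and when no red tank precedes a blue one it is exactly
   the blue total.  The weights are nonincreasing along the row (concavity and
   supermodularity of [transfer], each obtained from a discrete maximum
   principle for its averaging recursion), so by the rearrangement inequality the decreasingly sorted row maximises the form, and
   an equilibration never increases its sorted value.  Hence the blue total after
   any strategy is at most the sorted value of the initial levels, which is the
   outcome of the procedure. *)

Section Transfer.
Variable R : realFieldType.

(* [transfer p q] is the water that the procedure moves into q empty blue tanks
   standing right of p red tanks of level 1. *)
Fixpoint transfer (p q : nat) {struct p} : R :=
  if p is p'.+1 then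
    (fix transfer_p q := if q is q'.+1
       then (transfer p' q'.+1 + transfer_p q' + 1) / 2 else 0) q
  else 0.

Lemma transfer0n q : transfer 0 q = 0. Proof. by []. Qed.
Lemma transfern0 p : transfer p 0 = 0. Proof. by case: p. Qed.
Lemma transferSS p q :
  transfer p.+1 q.+1 = (transfer p q.+1 + transfer p.+1 q + 1) / 2.
Proof. by []. Qed.

Lemma avg_rec_ge0 (X : nat -> nat -> R) :
  (forall p q, X p.+1 q.+1 = (X p q.+1 + X p.+1 q) / 2) ->
  (forall q, 0 <= X 0%N q) -> (forall p, 0 <= X p 0%N) ->
  forall p q, 0 <= X p q.
Proof.
move=> rec X0n Xn0; elim=> [|p IHp] q; first exact: X0n.
elim: q => [|q IHq]; first exact: Xn0.
by rewrite rec divr_ge0 ?addr_ge0.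
Qed.

Lemma transferC p q : transfer p q = transfer q p.
Proof.
elim: p q => [|p IHp] q; first by rewrite transfern0.
elim: q => [|q IHq]; first by rewrite transfern0.
by rewrite !transferSS IHp IHq (addrC (transfer q.+1 p)).
Qed.

Lemma transfer1n_le1 q : transfer 1 q <= 1.
Proof.
elim: q => [|q IHq]; first by rewrite transfern0 ler01.
by rewrite transferSS transfer0n; lra.
Qed.

Lemma transfern1_le1 p : transfer p 1 <= 1.
Proof. by rewrite transferC transfer1n_le1. Qed.

Lemma transfer_concave_l p q :
  transfer p.+2 q - transfer p.+1 q <= transfer p.+1 q - transfer p q.
Proof.
rewrite -subr_ge0; move: p q.
apply: (@avg_rec_ge0 (fun p q =>
  transfer p.+1 q - transfer p q - (transfer p.+2 q - transfer p.+1 q))).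
- by move=> p q; rewrite !transferSS; field.
- move=> q; rewrite transfer0n; suff: 0 <= 2 * transfer 1 q - transfer 2 q by lra.
  elim: q => [|q IHq]; first by rewrite !transfern0; lra.
  rewrite (transferSS 1) transferSS transfer0n.
  by have := transfer1n_le1 q; lra.
- by move=> p; rewrite !transfern0 subrr.
Qed.

Lemma transfer_concave_r p q :
  transfer p q.+2 - transfer p q.+1 <= transfer p q.+1 - transfer p q.
Proof. by rewrite ![transfer p _]transferC transfer_concave_l. Qed.

Lemma transfer_supermodular p q :
  transfer p.+1 q - transfer p q <= transfer p.+1 q.+1 - transfer p q.+1.
Proof.
rewrite -subr_ge0; move: p q.
apply: (@avg_rec_ge0 (fun p q =>
  transfer p.+1 q.+1 - transfer p q.+1 - (transfer p.+1 q - transfer p q))).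
- by move=> p q; rewrite !transferSS; field.
- by move=> q; rewrite !transfer0n transferSS transfer0n; have := transfer1n_le1 q; lra.
- by move=> p; rewrite !transfern0 transferSS transfern0; have := transfern1_le1 p; lra.
Qed.

Lemma transfer_diag_le p q :
  transfer p.+1 q + transfer p q.+1 <= 1 + 2 * transfer p q.
Proof.
rewrite -subr_ge0; move: p q.
apply: (@avg_rec_ge0 (fun p q =>
  1 + 2 * transfer p q - (transfer p.+1 q + transfer p q.+1))).
- by move=> p q; rewrite !transferSS; field.
- by move=> q; rewrite !transfer0n; have := transfer1n_le1 q; lra.
- by move=> p; rewrite !transfern0; have := transfern1_le1 p; lra.
Qed.

(* The coefficient of the level of a tank of colour [b] (true = blue) in the
   final blue total, when p red tanks precede it and q blue tanks, itself
   included, follow it. *)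
Definition weight (b : bool) (p q : nat) : R :=
  if b then (if q is q'.+1 then 1 + transfer p q' - transfer p q'.+1 else 0)
  else transfer p.+1 q - transfer p q.

Definition next_reds (b : bool) (p : nat) : nat := if b then p else p.+1.
Definition next_blues (b : bool) (q : nat) : nat := if b then q.-1 else q.

Lemma next_redsC b1 b2 p :
  next_reds b1 (next_reds b2 p) = next_reds b2 (next_reds b1 p).
Proof. by case: b1; case: b2. Qed.

Lemma next_bluesC b1 b2 q :
  next_blues b1 (next_blues b2 q) = next_blues b2 (next_blues b1 q).
Proof. by case: b1; case: b2. Qed.

Lemma weight_swap b1 b2 p q :
  weight b1 p q + weight b2 (next_reds b1 p) (next_blues b1 q) =
  weight b2 p q + weight b1 (next_reds b2 p) (next_blues b2 q).
Proof.
by case: b1; case: b2; case: q => [|q]; rewrite /weight /= ?transfern0; ring.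
Qed.

Lemma weight_shift_le b1 b2 p q :
  weight b2 (next_reds b1 p) (next_blues b1 q) <= weight b2 p q.
Proof.
case: b1; case: b2; rewrite /weight /next_reds /next_blues.
- case: q => [|[|q]] //=; last by have := transfer_concave_r p q; lra.
  by rewrite transfern0; have := transfern1_le1 p; lra.
- by case: q => [|q] //; rewrite transfer_supermodular.
- by case: q => [|q] //; have := transfer_supermodular p q; lra.
- exact: transfer_concave_l.
Qed.

Lemma weight_next_le b1 b2 p q :
  weight b2 (next_reds b1 p) (next_blues b1 q) <= weight b1 p q.
Proof.
case: b1; case: b2; rewrite /weight /next_reds /next_blues.
- case: q => [|[|q]] //=; last by have := transfer_concave_r p q; lra.
  by rewrite transfern0; have := transfern1_le1 p; lra.
- case: q => [|q]; first by rewrite !transfern0 subrr.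
  by have := transfer_diag_le p q; lra.
- case: q => [|q]; first by rewrite !transfern0 subrr.
  by rewrite transferSS; lra.
- exact: transfer_concave_l.
Qed.

Lemma weight_red_blue p q : weight false p q = weight true p.+1 q.
Proof.
case: q => [|q]; rewrite /weight; first by rewrite !transfern0 subrr.
by rewrite transferSS; field.
Qed.

End Transfer.

Lemma avg_mul_le (R : realFieldType) (a b u v : R) :
  b <= a -> v <= u -> (a + b) / 2 * (u + v) <= a * u + b * v.
Proof.
move=> ba vu; have : 0 <= (a - b) * (u - v) by rewrite mulr_ge0 ?subr_ge0.
by nra.
Qed.

Section SeqFacts.
Variable T : eqType.

Lemma pairwise_insert (r : rel T) s1 s2 c d :
  pairwise r (s1 ++ c :: s2) -> (forall x, r x c -> r x d) ->
  (forall x, r c x -> r d x) -> r c d -> pairwise r (s1 ++ c :: d :: s2).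
Proof.
move=> h rc rc' rcd; elim: s1 h => [|x s1 IH]; rewrite ?cat0s ?cat_cons.
  rewrite !pairwise_cons /= => /andP [hc ->]; rewrite rcd hc /= andbT.
  by apply: sub_all hc => y; apply: rc'.
rewrite !pairwise_cons => /andP [hx /IH ->]; rewrite andbT.
by move: hx; rewrite !all_cat /= => /and3P [-> /[dup] /rc -> ->].
Qed.

Lemma perm_to_front s1 s2 (c d : T) :
  perm_eq (s1 ++ c :: d :: s2) (d :: s1 ++ c :: s2).
Proof. by apply/permP => P; rewrite /= !count_cat /=; lia. Qed.

Lemma perm_swap_adjacent s1 s2 (c d : T) :
  perm_eq (s1 ++ c :: d :: s2) (s1 ++ d :: c :: s2).
Proof. by apply/permP => P; rewrite /= !count_cat /=; lia. Qed.

Lemma uniq_adjacent s1 s2 (c d : T) : uniq (s1 ++ c :: d :: s2) ->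
  [/\ c \notin s1, d \notin s1, c \notin s2, d \notin s2 & c != d].
Proof.
rewrite cat_uniq /= in_cons !negb_or.
by case/and5P => _ /and3P [? ? _] /andP [? ?] ? _.
Qed.

End SeqFacts.

Lemma equilibrate_out (R : realFieldType) n (y : 'I_n -> R) c d a :
  a != c -> a != d -> equilibrate y c d a = y a.
Proof. by move=> /negbTE ac /negbTE ad; rewrite /equilibrate ac ad. Qed.

Lemma equilibrateC (R : realFieldType) n (y : 'I_n -> R) c d :
  equilibrate y c d =1 equilibrate y d c.
Proof. by move=> a; rewrite /equilibrate orbC addrC. Qed.

Section Rows.
Variables (R : realFieldType) (n : nat) (col : 'I_n -> bool).

Fixpoint row_value (p q : nat) (l : seq 'I_n) (y : 'I_n -> R) : R :=
  if l is a :: l' then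
    y a * weight R (col a) p q +
    row_value (next_reds (col a) p) (next_blues (col a) q) l' y
  else 0.

Lemma row_value_cat p q l1 l2 y :
  row_value p q (l1 ++ l2) y =
  row_value p q l1 y + row_value (p + count (predC col) l1) (q - count col l1) l2 y.
Proof.
elim: l1 p q => [|a l1 IH] p q /=; first by rewrite add0r addn0 subn0.
rewrite IH addrA /next_reds /next_blues.
by congr (_ + row_value _ _ _ _); case: (col a) => /=; lia.
Qed.

Lemma eq_in_row_value p q l y z :
  {in l, y =1 z} -> row_value p q l y = row_value p q l z.
Proof.
elim: l p q => [|a l IH] p q //= yz.
by rewrite yz ?mem_head // IH // => b bl; rewrite yz // in_cons bl orbT.
Qed.

Lemma row_value_n0 p l y : row_value p 0 l y = 0.
Proof.
elim: l p => [|a l IH] p //=; have -> : next_blues (col a) 0 = 0%N by case: (col a).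
by rewrite IH addr0; case: (col a); rewrite /weight ?transfern0 ?subrr mulr0.
Qed.

Lemma row_value_swap_le p q u a l y : y u <= y a ->
  row_value p q [:: u, a & l] y <= row_value p q [:: a, u & l] y.
Proof.
move=> ua /=; rewrite (next_redsC (col a)) (next_bluesC (col a)) !addrA lerD2r.
have := weight_swap R (col u) (col a) p q; have := weight_shift_le R (col u) (col a) p q.
set w1 := weight R (col u) p q; set w2 := weight R (col a) _ _.
set w3 := weight R (col a) p q; set w4 := weight R (col u) _ _ => w32 sum.
have : 0 <= (y a - y u) * (w3 - w2) by rewrite mulr_ge0 ?subr_ge0.
by nra.
Qed.

Lemma row_value_to_front a t1 t2 y : all (fun u => y u <= y a) t1 ->
  forall p q, row_value p q (t1 ++ a :: t2) y <= row_value p q (a :: t1 ++ t2) y.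
Proof.
elim: t1 => [|u t1 IH] /= => [_ p q|/andP [ua t1a] p q]; first exact: lexx.
by apply: le_trans (row_value_swap_le p q _ ua); rewrite /= lerD2l IH.
Qed.

Lemma row_value_le_sorted y s : pairwise (fun a b => y b <= y a) s ->
  forall t, perm_eq t s -> forall p q, row_value p q t y <= row_value p q s y.
Proof.
elim: s => [|a s IH] /=; first by move=> _ t /perm_nilP -> p q.
case/andP=> sa ss t ts.
have ta : a \in t by rewrite (perm_mem ts) mem_head.
move: ts; case/splitPr: ta => t1 t2 ts p q.
have t1a : all (fun u => y u <= y a) t1.
  apply/allP => u ut1; have : u \in a :: s by rewrite -(perm_mem ts) mem_cat ut1.
  by rewrite in_cons => /predU1P [-> //|/(allP sa)].
apply: le_trans (row_value_to_front t2 t1a p q) _; rewrite /= lerD2l IH //.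
by rewrite -(perm_cons a) -(perm_catCA t1 [:: a] t2).
Qed.

Fixpoint blues_first (l : seq 'I_n) : bool :=
  if l is a :: l' then (if col a then blues_first l' else ~~ has col l') else true.

Lemma row_value_blues_first l y :
  blues_first l -> row_value 0 (count col l) l y = \sum_(a <- l | col a) y a.
Proof.
elim: l => [|a l IH]; first by rewrite big_nil.
rewrite /= big_cons; case: (col a) => bl; rewrite /weight /next_reds /next_blues.
  by rewrite add1n /= -IH //; ring.
have -> : count col l = 0%N by apply/eqP; rewrite -leqn0 leqNgt -has_count.
by rewrite row_value_n0 big_hasC // !transfern0; ring.
Qed.

Lemma blues_first_cat s t : all col s -> ~~ has col t -> blues_first (s ++ t).
Proof.
elim: s => [|a s IH] /=; last by case/andP=> -> /IH.
by case: t => [|a t] //= _ /norP [/negbTE -> ->].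
Qed.

Lemma not_red_left_of_blue_blues_first r :
  ~ red_left_of_blue col r -> blues_first r.
Proof.
elim: r => [|a r IH] //= nr; case ca: (col a).
  apply: IH => -[r1 [r2 [r3 [a' [b [e ca' cb]]]]]]; apply: nr.
  by exists (a :: r1), r2, r3, a', b; rewrite e.
apply/negP => /hasP [b br cb]; apply: nr; case/splitPr: br => r2 r3.
by exists [::], r2, r3, a, b; rewrite ca.
Qed.

Lemma red_left_of_blue_adjacent r : red_left_of_blue col r ->
  exists r1 r2 a b, [/\ r = r1 ++ a :: b :: r2, ~~ col a & col b].
Proof.
case=> r1 [r2 [r3 [a [b [-> ca cb]]]]].
elim: r2 r1 a ca => [|c r2 IH] r1 a ca; first by exists r1, r3, a, b.
case cc: (col c); first by exists r1, (r2 ++ b :: r3), a, c.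
have [r1' [r2' [a' [b' [e ca' cb']]]]] := IH (r1 ++ [:: a]) c (negbT cc).
by exists r1', r2', a', b'; rewrite -e -catA.
Qed.

Definition blue_count : nat := count col (enum 'I_n).

Lemma pairwise_sort_ge (y : 'I_n -> R) s :
  pairwise (fun a b => y b <= y a) (sort (fun a b => y b <= y a) s).
Proof.
rewrite -sorted_pairwise ?sort_sorted // => [a b|b a c ab bc].
  exact: le_total.
exact: le_trans bc ab.
Qed.

Definition sorted_value (y : 'I_n -> R) : R :=
  row_value 0 blue_count (sort (fun a b => y b <= y a) (enum 'I_n)) y.

Lemma sorted_value_max t y :
  perm_eq t (enum 'I_n) -> row_value 0 blue_count t y <= sorted_value y.
Proof.
move=> te; apply: row_value_le_sorted; first exact: pairwise_sort_ge.
by rewrite perm_sym perm_sort perm_sym.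
Qed.

Lemma sorted_valueE s y : perm_eq s (enum 'I_n) ->
  pairwise (fun a b => y b <= y a) s -> row_value 0 blue_count s y = sorted_value y.
Proof.
move=> se ss; apply/le_anti; rewrite sorted_value_max //=.
by apply: row_value_le_sorted; rewrite // perm_sort perm_sym.
Qed.

Lemma blue_total_row_value l y : perm_eq l (enum 'I_n) -> blues_first l ->
  blue_total col y = row_value 0 blue_count l y.
Proof.
move=> le bl; rewrite /blue_count -(permP le) row_value_blues_first //.
by rewrite (perm_big _ le) big_enum_cond.
Qed.

Lemma blue_total_le_sorted_value y : blue_total col y <= sorted_value y.
Proof.
set l := filter col (enum 'I_n) ++ filter (predC col) (enum 'I_n).
have le : perm_eq l (enum 'I_n) by rewrite perm_filterC.
rewrite (blue_total_row_value y le) ?sorted_value_max //.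
rewrite blues_first_cat ?filter_all //.
by apply/hasPn => a; rewrite mem_filter => /andP [].
Qed.

Lemma exists_sorted_adjacent (z : 'I_n -> R) c d : c != d -> z c = z d ->
  exists s1 s2, perm_eq (s1 ++ c :: d :: s2) (enum 'I_n) /\
    pairwise (fun a b => z b <= z a) (s1 ++ c :: d :: s2).
Proof.
move=> cd zcd; pose ge a b := z b <= z a.
set s := sort ge (rem d (enum 'I_n)).
have cs : c \in s by rewrite mem_sort rem_mem // mem_enum.
have ss : pairwise ge s by exact: pairwise_sort_ge.
have se : perm_eq s (rem d (enum 'I_n)) by rewrite perm_sort.
move: ss se; case/splitPr: cs => s1 s2 ss se.
exists s1, s2; split.
  apply: perm_trans (perm_to_front s1 s2 c d) _.
  rewrite perm_sym; apply: perm_trans (perm_to_rem (mem_enum _ d)) _.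
  by rewrite perm_cons perm_sym.
by apply: pairwise_insert ss _ _ _; rewrite /ge ?zcd.
Qed.

Lemma row_value_equilibrate_out p q l y c d : c \notin l -> d \notin l ->
  row_value p q l (equilibrate y c d) = row_value p q l y.
Proof.
move=> cl dl; apply: eq_in_row_value => a al; apply: equilibrate_out.
  by apply: contraNneq cl => <-.
by apply: contraNneq dl => <-.
Qed.

Lemma row_value_equilibrate_le p q r1 r2 c d y :
  uniq (r1 ++ c :: d :: r2) -> y d <= y c ->
  row_value p q (r1 ++ c :: d :: r2) (equilibrate y c d) <=
  row_value p q (r1 ++ c :: d :: r2) y.
Proof.
case/uniq_adjacent => c1 d1 c2 d2 cd dc.
rewrite !row_value_cat row_value_equilibrate_out // lerD2l /=.
rewrite row_value_equilibrate_out // !addrA lerD2r.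
rewrite /equilibrate !eqxx orbT -mulrDr.
exact: avg_mul_le (weight_next_le _ _ _ _ _).
Qed.

Lemma sorted_value_equilibrate y c d : c != d ->
  sorted_value (equilibrate y c d) <= sorted_value y.
Proof.
move=> cd; set z := equilibrate y c d.
have zcd : z c = z d by rewrite /z /equilibrate !eqxx orbT.
have [dc|cd'] := leP (y d) (y c).
  have [s1 [s2 [se ss]]] := exists_sorted_adjacent cd zcd.
  rewrite -(sorted_valueE se ss); apply: le_trans (sorted_value_max y se).
  by rewrite row_value_equilibrate_le // (perm_uniq se) enum_uniq.
rewrite eq_sym in cd; have [s1 [s2 [se ss]]] := exists_sorted_adjacent cd (esym zcd).
rewrite -(sorted_valueE se ss); apply: le_trans (sorted_value_max y se).
rewrite (eq_in_row_value _ _ (fun a _ => equilibrateC y c d a)).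
by rewrite row_value_equilibrate_le ?ltW // (perm_uniq se) enum_uniq.
Qed.

Lemma blue_total_run_le st y : valid_strategy st ->
  blue_total col (run_strategy y st) <= sorted_value y.
Proof.
elim: st y => [|[c d] st IH] y /=; first by rewrite blue_total_le_sorted_value.
by case/andP=> cd vst; apply: le_trans (IH _ vst) (sorted_value_equilibrate y cd).
Qed.

Lemma row_value_step p q r1 r2 a b y :
  uniq (r1 ++ a :: b :: r2) -> ~~ col a -> col b ->
  row_value p q (r1 ++ b :: a :: r2) (equilibrate y a b) =
  row_value p q (r1 ++ a :: b :: r2) y.
Proof.
case/uniq_adjacent => a1 b1 a2 b2 _ /negbTE ca cb.
rewrite !row_value_cat row_value_equilibrate_out //; congr (_ + _).
rewrite /= ca cb row_value_equilibrate_out // !addrA; congr (_ + _).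
set P := (p + _)%N; set Q := (q - _)%N.
have := weight_swap R false true P Q; rewrite -weight_red_blue; cbn -[weight] => sum.
by rewrite /equilibrate !eqxx orbT -mulrDr -sum; field.
Qed.

Lemma reaches_row_value (s s' : state R n) : reaches col s s' ->
  perm_eq s.2 (enum 'I_n) ->
  perm_eq s'.2 (enum 'I_n) /\
  row_value 0 blue_count s'.2 s'.1 = row_value 0 blue_count s.2 s.1.
Proof.
elim=> [//|{}s s1 s2 [r1 [r2 [a [b [-> ca cb -> ->]]]]] _ IH] se.
have se1 : perm_eq (r1 ++ b :: a :: r2) (enum 'I_n).
  by apply: perm_trans se; rewrite perm_swap_adjacent.
have [-> ->] := IH se1; split=> //.
by rewrite row_value_step // (perm_uniq se) enum_uniq.
Qed.

Fixpoint inversions (l : seq 'I_n) : nat :=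
  if l is a :: l' then ((if col a then 0 else count col l') + inversions l')%N
  else 0%N.

Lemma inversions_cat l1 l2 : inversions (l1 ++ l2) =
  (inversions l1 + count (predC col) l1 * count col l2 + inversions l2)%N.
Proof.
by elim: l1 => [|a l1 IH] //=; rewrite IH count_cat; case: (col a) => /=; lia.
Qed.

Lemma proc_step_inversions (s s' : state R n) :
  proc_step col s s' -> (inversions s'.2 < inversions s.2)%N.
Proof.
case=> r1 [r2 [a [b [-> /negbTE ca cb _ ->]]]].
by rewrite !inversions_cat /= ca cb /=; lia.
Qed.

End Rows.

Theorem mainTheorem3 (R : realFieldType) (n : nat)
    (col : 'I_n -> bool) (x0 : 'I_n -> R) (r0 : seq 'I_n) :
  initial_row col x0 r0 ->
  (* termination: no infinite execution of the procedure *)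
  (forall f : nat -> state R n, f 0%N = (x0, r0) ->
      ~ (forall k, proc_step col (f k) (f k.+1))) /\
  (* the procedure never gets stuck while the loop condition holds *)
  (forall s, reaches col (x0, r0) s -> red_left_of_blue col s.2 ->
      exists s', proc_step col s s') /\
  (* optimality of any final state *)
  (forall s, reaches col (x0, r0) s -> ~ red_left_of_blue col s.2 ->
      forall strat : seq ('I_n * 'I_n), valid_strategy strat ->
        blue_total col (run_strategy x0 strat) <= blue_total col s.1).
Proof.
case=> r0e r0_before.
have r0_sorted : pairwise (fun a b => x0 b <= x0 a) r0.
  by apply: sub_pairwise r0_before => a b /orP [/ltW //|/andP [/eqP -> _]].
split; [|split].
- move=> f f0 steps.
  have decr k : (inversions col (f k).2 + k <= inversions col r0)%N.
    elim: k => [|k IHk]; first by rewrite f0 addn0.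
    by have := proc_step_inversions (steps k); lia.
  by have := decr (inversions col r0).+1; lia.
- move=> s _ /red_left_of_blue_adjacent [r1 [r2 [a [b [e ca cb]]]]].
  by exists (equilibrate s.1 a b, r1 ++ b :: a :: r2), r1, r2, a, b.
- move=> s x0s nr st vst; have [se value_s] := reaches_row_value x0s r0e.
  rewrite (blue_total_row_value s.1 se (not_red_left_of_blue_blues_first nr)).
  by rewrite value_s (sorted_valueE col r0e r0_sorted) blue_total_run_le.
Qed.
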